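(* Let $G$ be a context-free grammar, $k\ge0$, and $N$ its canonical LR($k$) NFA. Let $U_0,U_1,\dots,U_r$ be vertices of $N$ with $U_0$ the starting vertex and an edge $U_{i-1}\xrightarrow{\sigma_i}U_i$ for each $i$ (labels $\sigma_i\in\Sigma\cup\Lambda\cup\{\varepsilon\}$), and suppose $U_r$ has an action on a lookahead $\lambda\in\Gamma^k$. Let $\zeta=\zeta_1\cdots\zeta_m$ be the string of non-$\varepsilon$ labels among $\sigma_1,\dots,\sigma_r$. Suppose $x_1\cdots x_s\in\Sigma^*$ and $P_1,\dots,P_m$ are parse trees, $P_j$ having root $\zeta_j$ (a single leaf if $\zeta_j$ is terminal), whose yields concatenate to $x_1\cdots x_s$; let $\mathcal S_{\mathrm{part}}$ be the concatenation of the LR parses of $P_1,\dots,P_m$. Then there exist $x_{s+1}\cdots x_n\in\Sigma^*$ with $\mathrm{First}_k(x_{s+1}\cdots x_n\dashv^k)=\{\lambda\}$ and a parse tree of $x_1\cdots x_n$ with root $S$ whose LR parse $\mathcal S$ has $\mathcal S_{\mathrm{part}}$ as a prefix.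
   Context: $G$ has finite nonterminal set $\Lambda$, terminal set $\Sigma$, $\Gamma=\Sigma\cup\{\dashv\}$ with $\dashv$ an end marker, and start symbol $S$ which appears on the left of exactly one production $S\to\eta$ and on no right-hand side. For $T\subseteq(\Lambda\cup\Gamma)^*$, $\mathrm{Gen}(T)$ is the set of $y\in\Gamma^*$ with $x\Rightarrow^*y$ for some $x\in T$, and $\mathrm{First}_k(T)=\{x_1\cdots x_{\min(k,r)}: x_1\cdots x_r\in T\}$; concatenations involving sets are taken elementwise. A dotted production is $X\to\alpha\cdot\beta$ where $X\to\alpha\beta$ is a production. Forward-reachable $k$-follow strings: the least assignment of subsets of $\Gamma^k$ to productions such that $\dashv^k$ is assigned to $S\to\eta$, and whenever $\lambda$ is assigned to $X\to\alpha Y\beta$ then every $\mu\in\mathrm{First}_k(\mathrm{Gen}(\beta\lambda))$ is assigned to every production $Y\to\gamma$. For a dotted production $\hat\Pi$ with underlying production $\Pi$, $\mathcal U(\hat\Pi)$ is the set assigned to $\Pi$. Canonical LR($k$) NFA: vertices $(\hat\Pi,\lambda)$ with $\lambda\in\mathcal U(\hat\Pi)$; starting vertex $(S\to\cdot\,\eta,\dashv^k)$; $\varepsilon$-edges from $(X\to\alpha\cdot Y\beta,\lambda)$ to $(Y\to\cdot\,\gamma,\mu)$ whenever $\mu\in\mathrm{First}_k(\mathrm{Gen}(\beta\lambda))$; edges labeled $\tau\in\Lambda\cup\Sigma$ from $(X\to\alpha\cdot\tau\beta,\lambda)$ to $(X\to\alpha\tau\cdot\beta,\lambda)$. Actions: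 vertex $(X\to\alpha\,\cdot,\lambda)$ has action ``Reduce $X\to\alpha$'' on lookahead $\lambda$; vertex $(X\to\alpha\cdot\sigma\beta,\lambda)$ with $\sigma\in\Sigma$ has action ``Shift'' on each lookahead $\mu\in\mathrm{First}_k(\mathrm{Gen}(\sigma\beta\lambda))$; there are no other actions. LR parse of a parse tree $P$: the sequence of operations obtained by a postorder traversal of $P$, where a leaf labeled by a terminal $\sigma$ contributes $\mathrm{Shift}(\sigma)$ and an internal node expanded by production $\Pi$ contributes $\mathrm{Reduce}(\Pi)$ (after its children; a node for a production $X\to\varepsilon$ has no children). *)

From mathcomp Require Import all_boot.
From Stdlib Require Import Relations.

Set Implicit Arguments.
Unset Strict Implicit.
Unset Printing Implicit Defensive.

Section Grammar.

(* Lam = nonterminals, Sig = terminals.  Gamma = Sig u {-|} is [option Sig],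
   with [None] the end marker -|.  Grammar symbols on right-hand sides of
   productions range over Lam + Sig; sentential forms used by Gen range over
   Lam + Gamma = Lam + option Sig. *)
Variables (Lam Sig : finType).

Record grammar := Grammar {
  prods : seq (Lam * seq (Lam + Sig));
  start : Lam
}.

Variable G : grammar.

Definition start_condition : Prop :=
  count (fun p => p.1 == start G) (prods G) = 1 /\
  all (fun p => inl (start G) \notin p.2) (prods G).

Definition gsym := (Lam + option Sig)%type.

Definition lift (a : seq (Lam + Sig)) : seq gsym :=
  map (fun s => match s with inl X => inl X | inr t => inr (Some t) end) a.

Inductive dstep : seq gsym -> seq gsym -> Prop :=
| dstep_intro u v X a : (X, a) \in prods G ->
    dstep (u ++ inl X :: v) (u ++ lift a ++ v).

Definition derives : seq gsym -> seq gsym -> Prop := clos_refl_trans _ dstep.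

Definition Gen (w : seq gsym) (y : seq (option Sig)) : Prop :=
  derives w (map inr y).

Variable k : nat.

Definition FirstGen (w : seq gsym) (mu : seq (option Sig)) : Prop :=
  exists2 y, Gen w y & mu = take k y.

Inductive follow : Lam * seq (Lam + Sig) -> seq (option Sig) -> Prop :=
| follow_start eta : (start G, eta) \in prods G ->
    follow (start G, eta) (nseq k None)
| follow_step X alpha Y beta lam gamma mu :
    (X, alpha ++ inl Y :: beta) \in prods G ->
    follow (X, alpha ++ inl Y :: beta) lam ->
    (Y, gamma) \in prods G ->
    FirstGen (lift beta ++ map inr lam) mu ->
    follow (Y, gamma) mu.

(* Candidate vertices: dotted production X -> alpha . beta with lookahead *)
Record vertex := Vertex {
  v_lhs : Lam;
  v_alpha : seq (Lam + Sig);
  v_beta : seq (Lam + Sig);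
  v_la : seq (option Sig)
}.

Definition is_vertex (U : vertex) : Prop :=
  (v_lhs U, v_alpha U ++ v_beta U) \in prods G /\
  follow (v_lhs U, v_alpha U ++ v_beta U) (v_la U).

Definition start_vertex (eta : seq (Lam + Sig)) : vertex :=
  Vertex (start G) [::] eta (nseq k None).

(* edge labels: None = epsilon, Some tau with tau \in Lam u Sig *)
Definition raw_edge (U : vertex) (l : option (Lam + Sig)) (V : vertex) : Prop :=
  match l with
  | None =>
      exists Y beta,
        v_beta U = inl Y :: beta /\ v_lhs V = Y /\ v_alpha V = [::] /\
        (Y, v_beta V) \in prods G /\
        FirstGen (lift beta ++ map inr (v_la U)) (v_la V)
  | Some tau =>
      exists beta,
        v_beta U = tau :: beta /\
        V = Vertex (v_lhs U) (rcons (v_alpha U) tau) beta (v_la U)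
  end.

Definition edge U l V : Prop := is_vertex U /\ is_vertex V /\ raw_edge U l V.

(* a path U = U_0 -sigma_1-> U_1 -> ... -> U_r given as list of (sigma_i, U_i) *)
Fixpoint nfa_path (U : vertex) (steps : seq (option (Lam + Sig) * vertex)) : Prop :=
  match steps with
  | [::] => True
  | (l, V) :: t => edge U l V /\ nfa_path V t
  end.

(* U has an action (Reduce or Shift) on lookahead mu *)
Definition has_action (U : vertex) (mu : seq (option Sig)) : Prop :=
  (v_beta U = [::] /\ mu = v_la U) \/
  (exists sigma beta, v_beta U = inr sigma :: beta /\
     FirstGen (inr (Some sigma) :: lift beta ++ map inr (v_la U)) mu).

Inductive ptree :=
| Leaf of Sig
| Node of Lam & seq (Lam + Sig) & seq ptree.

Definition proot (t : ptree) : Lam + Sig :=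
  match t with Leaf a => inr a | Node X _ _ => inl X end.

Fixpoint valid (t : ptree) : bool :=
  match t with
  | Leaf _ => true
  | Node X rhs ch =>
      [&& (X, rhs) \in prods G, map proot ch == rhs & all valid ch]
  end.

Fixpoint yield (t : ptree) : seq Sig :=
  match t with
  | Leaf a => [:: a]
  | Node _ _ ch => flatten (map yield ch)
  end.

Inductive lr_op := Shift of Sig | Reduce of Lam & seq (Lam + Sig).

Fixpoint lrparse (t : ptree) : seq lr_op :=
  match t with
  | Leaf a => [:: Shift a]
  | Node X rhs ch => flatten (map lrparse ch) ++ [:: Reduce X rhs]
  end.

Definition is_prefix (A : Type) (s t : seq A) : Prop := exists u, t = s ++ u.

End Grammar.

From Pilot Require Import Defs.
From mathcomp Require Import all_boot.
From Stdlib Require Import Relations.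

Set Implicit Arguments.
Unset Strict Implicit.
Unset Printing Implicit Defensive.

(* Walk the NFA path backwards, maintaining a forest [Fs] whose roots spell
   the part [beta] after the dot of the current item [X -> alpha . beta],
   whose yield extends that of the given trees by some [w], and such that
   [First_k(w lambda_U)] is the target lookahead.  A symbol edge prepends the
   next given tree to the forest.  An epsilon edge into [Y -> . gamma] closes
   the forest (which spells [gamma]) into a single node [Y], and the string
   [beta lambda_U] from which [lambda_V] was drawn is realized by parse trees
   for [beta] followed by [lambda_U]; these trees are appended, and the
   lookahead is preserved because truncating to [k] symbols commutes with
   appending.  At the start vertex the forest spells [eta], so one node [S]
   on top of it is the required parse tree. *)

Lemma take_cat_take (T : Type) (n k : nat) (a b : seq T) : n <= k ->
  take n (a ++ take k b) = take n (a ++ b).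
Proof.
elim: a n => [|x a IHa] n le_nk; first by rewrite take_takel.
by case: n le_nk => [|n] le_nk //=; rewrite IHa // ltnW.
Qed.

Section Completion.

Variables (Lam Sig : finType) (G : grammar Lam Sig) (k : nat).

Notation gsym := (gsym Lam Sig).
Notation ptree := (ptree Lam Sig).

Definition forest_yield (Ts : seq ptree) : seq Sig :=
  flatten (map (@yield _ _) Ts).

Definition forest_parse (Ts : seq ptree) : seq (lr_op Lam Sig) :=
  flatten (map (@lrparse _ _) Ts).

Lemma forest_yield_cons T Ts : forest_yield (T :: Ts) = yield T ++ forest_yield Ts.
Proof. by []. Qed.

Lemma forest_parse_cons T Ts : forest_parse (T :: Ts) = lrparse T ++ forest_parse Ts.
Proof. by []. Qed.

Lemma yield_Node X rhs Ts : yield (Node X rhs Ts) = forest_yield Ts.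
Proof. by []. Qed.

Lemma lrparse_Node X rhs Ts :
  lrparse (Node X rhs Ts) = forest_parse Ts ++ [:: Reduce X rhs].
Proof. by []. Qed.

Inductive forest_gen : seq gsym -> seq (option Sig) -> Prop :=
| forest_gen_nil : forest_gen [::] [::]
| forest_gen_term t w y : forest_gen w y -> forest_gen (inr t :: w) (t :: y)
| forest_gen_tree (T : ptree) X w y : valid G T -> proot T = inl X ->
    forest_gen w y -> forest_gen (inl X :: w) (map Some (yield T) ++ y).

Lemma forest_gen_cat u v y1 y2 :
  forest_gen u y1 -> forest_gen v y2 -> forest_gen (u ++ v) (y1 ++ y2).
Proof.
elim=> [|t w y _ IH|T X w y vT rT _ IH] gen_v //=.
- by apply: forest_gen_term; apply: IH.
- by rewrite -catA; apply: forest_gen_tree => //; apply: IH.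
Qed.

Lemma forest_gen_catP u v y : forest_gen (u ++ v) y ->
  exists y1 y2, [/\ y = y1 ++ y2, forest_gen u y1 & forest_gen v y2].
Proof.
elim: u y => [|s u IH] y /=.
  by move=> gen_v; exists [::], y; split=> //; apply: forest_gen_nil.
move=> gen_suv; inversion gen_suv as [|t w y' gen_w|T X w y' vT rT gen_w]; subst.
- have [y1 [y2 [-> gen_u gen_v]]] := IH _ gen_w.
  by exists (t :: y1), y2; split => //; apply: forest_gen_term.
- have [y1 [y2 [-> gen_u gen_v]]] := IH _ gen_w.
  exists (map Some (yield T) ++ y1), y2; rewrite catA.
  by split => //; apply: forest_gen_tree.
Qed.

Lemma forest_gen_liftP a y : forest_gen (Defs.lift a) y ->
  exists Ts : seq ptree,
    [/\ all (valid G) Ts, map (@proot _ _) Ts = a & y = map Some (forest_yield Ts)].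
Proof.
elim: a y => [|s a IH] y /=.
  by move=> gen_nil; inversion gen_nil; exists [::].
case: s => [X|t] gen_sa;
  inversion gen_sa as [|t' w y' gen_a|T X' w y' vT rT gen_a]; subst.
- have [Ts [vTs rTs ->]] := IH _ gen_a.
  exists (T :: Ts); rewrite /= vT rT vTs rTs /forest_yield /=.
  by split => //; rewrite map_cat.
- have [Ts [vTs rTs ->]] := IH _ gen_a.
  by exists (Leaf _ t :: Ts); rewrite /= rTs.
Qed.

Lemma forest_gen_terminals y : forest_gen (map inr y) y.
Proof.
by elim: y => [|t y IH] /=; [apply: forest_gen_nil | apply: forest_gen_term].
Qed.

Lemma forest_gen_terminalsK la y : forest_gen (map inr la) y -> y = la.
Proof.
elim: la y => [|t la IH] y /= gen_la;
  inversion gen_la as [|t' w y' gen_y|]; subst => //.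
by rewrite (IH _ gen_y).
Qed.

Lemma forest_gen_dstep w w' y : dstep G w w' -> forest_gen w' y -> forest_gen w y.
Proof.
case=> u v X a prod_Xa gen_uav.
have [y1 [y2 [-> gen_u gen_av]]] := forest_gen_catP gen_uav.
have [y21 [y22 [-> gen_a gen_v]]] := forest_gen_catP gen_av.
have [Ts [vTs rTs ->]] := forest_gen_liftP gen_a.
apply: forest_gen_cat => //.
apply: (@forest_gen_tree (Node X a Ts)) => //=.
by rewrite prod_Xa rTs eqxx vTs.
Qed.

Lemma forest_gen_Gen w y : Gen G w y -> forest_gen w y.
Proof.
move=> dw; have {dw} := clos_rt_rt1n _ _ _ _ dw.
move E: (map inr y) => z dw.
elim: dw E => [x <-|x x' z' step _ IH E]; first exact: forest_gen_terminals.
exact: forest_gen_dstep step (IH E).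
Qed.

Lemma FirstGen_forest beta la mu :
  FirstGen G k (Defs.lift beta ++ map inr la) mu ->
  exists Ts : seq ptree,
    [/\ all (valid G) Ts, map (@proot _ _) Ts = beta &
        mu = take k (map Some (forest_yield Ts) ++ la)].
Proof.
case=> y /forest_gen_Gen /forest_gen_catP [y1 [y2 [-> gen_beta gen_la]]] ->.
have [Ts [vTs rTs ->]] := forest_gen_liftP gen_beta.
by exists Ts; rewrite (forest_gen_terminalsK gen_la).
Qed.

Variable lam : seq (option Sig).

Definition completable (U : vertex Lam Sig) (Ps : seq ptree) : Prop :=
  exists Fs w, [/\ all (valid G) Fs, map (@proot _ _) Fs = v_beta U,
    forest_yield Fs = forest_yield Ps ++ w,
    lam = take k (map Some w ++ v_la U) &
    is_prefix (forest_parse Ps) (forest_parse Fs)].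

Lemma completable_action U : size lam = k -> has_action G k U lam ->
  completable U [::].
Proof.
move=> size_lam [[beta_nil la_U]|[sig [beta [beta_sig FG]]]].
  exists [::], [::]; rewrite beta_nil /= take_oversize -la_U ?size_lam //.
  by split=> //; exists [::].
have [Ts [vTs rTs la_Ts]] := FirstGen_forest (beta := inr sig :: beta) FG.
exists Ts, (forest_yield Ts); rewrite beta_sig.
by split=> //; exists (forest_parse Ts).
Qed.

Lemma completable_symbol_edge U tau V P Ps :
  raw_edge G k U (Some tau) V -> valid G P -> proot P = tau ->
  completable V Ps -> completable U (P :: Ps).
Proof.
move=> [beta [beta_tau ->]] vP rP [Fs [w [vFs rFs yFs la_w [u parse_u]]]].
exists (P :: Fs), w; rewrite beta_tau /= vP vFs rFs rP.
rewrite !forest_yield_cons !forest_parse_cons yFs parse_u !catA.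
by split=> //; exists u.
Qed.

Lemma completable_epsilon_edge U V Ps :
  raw_edge G k U None V -> completable V Ps -> completable U Ps.
Proof.
move=> [Y [beta [beta_Y [_ [_ [prod_V FG]]]]]].
move=> [Fs [w [vFs rFs yFs la_w [u parse_u]]]].
have [Ts [vTs rTs la_V]] := FirstGen_forest FG.
exists (Node Y (v_beta V) Fs :: Ts), (w ++ forest_yield Ts).
rewrite beta_Y /= vTs rTs prod_V rFs eqxx vFs.
rewrite forest_yield_cons forest_parse_cons yield_Node lrparse_Node.
rewrite yFs parse_u -!catA; split=> //.
- by rewrite la_w la_V map_cat -catA take_cat_take.
- by exists (u ++ [:: Reduce Y (v_beta V)] ++ forest_parse Ts).
Qed.

Lemma completable_path steps U (Ps : seq ptree) : size lam = k ->
  nfa_path G k U steps -> has_action G k (last U (map snd steps)) lam ->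
  map (@proot _ _) Ps = pmap id (map fst steps) -> all (valid G) Ps ->
  completable U Ps.
Proof.
move=> size_lam; elim: steps U Ps => [|[l V] steps IH] U Ps /=.
  by move=> _ act; case: Ps => // _ _; apply: completable_action.
case=> [[_ [_ e_UV]] path_V] act.
case: l e_UV => [tau|] e_UV.
- case: Ps => [|P Ps] //= [rP rPs] /andP[vP vPs].
  exact: completable_symbol_edge e_UV vP rP (IH V Ps path_V act rPs vPs).
- move=> rPs vPs.
  exact: completable_epsilon_edge e_UV (IH V Ps path_V act rPs vPs).
Qed.

End Completion.

Theorem mainTheorem13 (Lam Sig : finType) (G : grammar Lam Sig) (k : nat)
  (HG : start_condition G)
  (eta : seq (Lam + Sig)) (Heta : (start G, eta) \in prods G)
  (steps : seq (option (Lam + Sig) * vertex Lam Sig))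
  (Hpath : nfa_path G k (start_vertex G k eta) steps)
  (lam : seq (option Sig)) (Hlam : size lam = k)
  (Hact : has_action G k (last (start_vertex G k eta) (map snd steps)) lam)
  (xs : seq Sig) (Ps : seq (ptree Lam Sig))
  (Hroots : map (@proot Lam Sig) Ps = pmap id (map fst steps))
  (Hvalid : all (valid G) Ps)
  (Hyield : flatten (map (@yield Lam Sig) Ps) = xs) :
  exists xs' : seq Sig,
    take k (map Some xs' ++ nseq k None) = lam /\
    exists P : ptree Lam Sig,
      [/\ valid G P, proot P = inl (start G), yield P = xs ++ xs' &
          is_prefix (flatten (map (@lrparse Lam Sig) Ps)) (lrparse P)].
Proof.
have [Fs [w [vFs rFs yFs la_w [u parse_u]]]] :=
  completable_path Hlam Hpath Hact Hroots Hvalid.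
exists w; split; first by rewrite la_w.
exists (Node (start G) eta Fs); split=> //.
- by rewrite /= Heta rFs eqxx vFs.
- by rewrite yield_Node yFs -Hyield.
- rewrite lrparse_Node parse_u -catA.
  by exists (u ++ [:: Reduce (start G) eta]).
Qed.
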